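(* Let $2\le k\le n$. For every Bayesian persuasion instance with $n$ actions and $k$ signals there exists an optimal signaling scheme with $k$ signals that is direct and persuasive and uses its $k$ signals to recommend $k$ distinct actions. Moreover, if the instance is symmetric, there exists an optimal direct and persuasive scheme with $k$ signals whose signals recommend exactly the actions $1,\dots,k$.
   Context: A Bayesian persuasion instance: a receiver chooses one of the actions $[n]=\{1,\dots,n\}$. Each action $i$ has a type $\theta_i$ from a finite set $\Theta_i$; the state of nature $\boldsymbol\theta=(\theta_1,\dots,\theta_n)$ is drawn from a commonly known distribution $q$ on $\Theta\subseteq\Theta_1\times\dots\times\Theta_n$, with $q_{\boldsymbol\theta}$ the probability of $\boldsymbol\theta$. Each type $t$ has a receiver value $\rho(t)$ and a sender value $\xi(t)$; if the receiver takes action $i$ in state $\boldsymbol\theta$, the receiver gets $\rho(\theta_i)$ and the sender gets $\xi(\theta_i)$. A signaling scheme with $k$ signals is a map $\varphi$ assigning to each state $\boldsymbol\theta$ a probability distribution $\varphi(\boldsymbol\theta,\cdot)$ on a signal set $\Sigma$ with $|\Sigma|=k$. The sender commits to $\varphi$, observes $\boldsymbol\theta$, sends $\sigma\sim\varphi(\boldsymbol\theta,\cdot)$; the receiver, knowing $q$ and $\varphi$, chooses for each signal an action maximizing her conditional expected utility given $\sigma$, breaking ties in favor of the sender (and remaining ties by a fixed rule). $u_{\mathcal S}(\varphi)$ and $u_{\mathcal R}(\varphi)$ denote the resulting expected utilities of sender and receiver. A scheme is optimal with $k$ signals if it maximizes $u_{\mathcal S}$ over all schemes with $k$ signals. A scheme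 is direct if each signal is identified with an action it recommends; a direct scheme is persuasive if for every signal $\sigma$ sent with positive probability and recommending action $i$, $\mathbb E[\rho(\theta_i)\mid\sigma]\ge \mathbb E[\rho(\theta_j)\mid \sigma]$ for all $j\in[n]$. An instance is symmetric if $q_{\boldsymbol\theta}=q_{\boldsymbol\theta'}$ whenever $\boldsymbol\theta'$ is a permutation of $\boldsymbol\theta$. *)

From HB Require Import structures.
From mathcomp Require Import all_boot all_order all_algebra all_fingroup.
From mathcomp Require Import reals.
Set Implicit Arguments. Unset Strict Implicit. Unset Printing Implicit Defensive.
Import Order.TTheory GRing.Theory Num.Theory.
Local Open Scope ring_scope.

(* Types: all types of all actions live in a common finite universe T
   (Theta_i subset of T); a state is theta : {ffun 'I_n -> T}.
   rho, xi : T -> R are receiver / sender values of types.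
   The prior q is a probability distribution on states (its support is Theta).
   A signaling scheme with k signals: phi theta sigma = prob of sending
   signal sigma : 'I_k in state theta. *)

Section BP.
Variables (R : realType) (T : finType) (n k : nat).

Definition state := {ffun 'I_n -> T}.

Definition is_distr (q : {ffun state -> R}) : Prop :=
  (forall th, 0 <= q th) /\ \sum_th q th = 1.

Definition is_scheme (phi : {ffun state -> {ffun 'I_k -> R}}) : Prop :=
  (forall th s, 0 <= phi th s) /\ (forall th, \sum_s phi th s = 1).

Variables (q : {ffun state -> R}) (rho xi : T -> R).

Definition sig_prob (phi : {ffun state -> {ffun 'I_k -> R}}) (s : 'I_k) : R :=
  \sum_th q th * phi th s.

(* conditional expectation E[f theta | s] (0 if s has probability 0) *)
Definition cond_exp (phi : {ffun state -> {ffun 'I_k -> R}}) (s : 'I_k)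
  (f : state -> R) : R :=
  (\sum_th q th * phi th s * f th) / sig_prob phi s.

Definition recv_val (phi : {ffun state -> {ffun 'I_k -> R}}) (s : 'I_k) (i : 'I_n) : R := cond_exp phi s (fun th => rho (th i)).
Definition send_val (phi : {ffun state -> {ffun 'I_k -> R}}) (s : 'I_k) (i : 'I_n) : R := cond_exp phi s (fun th => xi (th i)).

Definition best_resp (phi : {ffun state -> {ffun 'I_k -> R}}) (s : 'I_k) : {set 'I_n} :=
  [set i | [forall j, recv_val phi s j <= recv_val phi s i]].

Definition recv_action (phi : {ffun state -> {ffun 'I_k -> R}}) (s : 'I_k) : option 'I_n :=
  [pick i | (i \in best_resp phi s) &&
            [forall j in best_resp phi s, send_val phi s j <= send_val phi s i]].

Definition u_S (phi : {ffun state -> {ffun 'I_k -> R}}) : R :=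
  \sum_s \sum_th q th * phi th s *
     (if recv_action phi s is Some i then xi (th i) else 0).

Definition optimal (phi : {ffun state -> {ffun 'I_k -> R}}) : Prop :=
  is_scheme phi /\ forall phi', is_scheme phi' -> u_S phi' <= u_S phi.

(* direct scheme: signal s recommends action rec s; persuasive *)
Definition persuasive (phi : {ffun state -> {ffun 'I_k -> R}}) (rec : 'I_k -> 'I_n) : Prop :=
  forall s, 0 < sig_prob phi s ->
    forall j, recv_val phi s j <= recv_val phi s (rec s).

End BP.

Definition symmetric_instance (R : realType) (T : finType) (n : nat)
  (q : {ffun state T n -> R}) : Prop :=
  forall (th : state T n) (p : 'S_n), q [ffun i => th (p i)] = q th.

From HB Require Import structures.
From mathcomp Require Import all_boot all_order all_algebra all_fingroup.
From mathcomp Require Import reals.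
From mathcomp Require Import all_classical all_analysis.
Import Order.TTheory GRing.Theory Num.Theory.
Import numFieldNormedType.Exports.
Set Implicit Arguments. Unset Strict Implicit. Unset Printing Implicit Defensive.
Local Open Scope ring_scope.

(* Every scheme is dominated by a persuasive direct scheme whose recommendation
   rec : 'I_k -> 'I_n is injective: pool the signals after which the receiver
   takes the same action (each action stays a best response and the sender's
   utility is unchanged) and leave the other signals unused on fresh actions.
   For a fixed rec, persuasiveness is a finite set of linear inequalities, so
   the persuasive schemes form a compact subset of a unit cube on which the
   linear direct value attains its maximum; maximising in addition over the
   finitely many injective rec yields an optimal scheme.  In a symmetric
   instance, relabelling the actions by a permutation sending 1..k to rec
   preserves persuasiveness and value, so one optimises for 1..k only. *)

Lemma perm_of_injections (I T : finType) (f g : I -> T) :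
  injective f -> injective g -> exists s : {perm T}, forall i, s (f i) = g i.
Proof.
move=> f_inj g_inj.
suff [s Hs] : exists s : {perm T}, forall i, i \in enum I -> s (f i) = g i.
  by exists s => i; apply: Hs; rewrite mem_enum.
elim: (enum I) (enum_uniq I) => [_|i r IH /= /andP [ir /IH [s Hs]]].
  by exists 1%g.
exists (s * tperm (s (f i)) (g i))%g => j; rewrite inE permM.
case/predU1P => [-> | jr]; first by rewrite tpermL.
have ij : i != j by apply: contraNneq ir => ->.
rewrite (Hs j jr) tpermD ?(inj_eq g_inj) //.
by rewrite -(Hs j jr) (inj_eq perm_inj) (inj_eq f_inj).
Qed.

Lemma perm_of_injection k n (hkn : (k <= n)%N) (rec : 'I_k -> 'I_n) :
  injective rec -> exists s : 'S_n, forall i, s (widen_ord hkn i) = rec i.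
Proof. by apply: perm_of_injections => i j /(congr1 val) /= /val_inj. Qed.

Lemma fun_of_finfun (aT : finType) (rT : Type) (f : aT -> rT) : fun_of_fin (finfun f) = f.
Proof. exact: funext (ffunE f). Qed.

Lemma superset_of_card (T : finType) (A : {set T}) m :
  (#|A| <= m <= #|T|)%N -> exists2 B : {set T}, A \subset B & #|B| = m.
Proof.
case/andP; elim: m => [|m IH] Am mT.
  by exists A => //; apply/eqP; rewrite -leqn0.
have [eqAm | neAm] := eqVneq #|A| m.+1; first by exists A.
have [|B sAB cardB] := IH _ (ltnW mT); first by rewrite -ltnS ltn_neqAle neAm.
have /card_gt0P [x] : (0 < #|~: B|)%N.
  by rewrite -(ltn_add2l #|B|) cardsC addn0 cardB.
rewrite inE => xB.
exists (x |: B); first exact: fintype.subset_trans sAB (subsetU1 x B).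
by rewrite cardsU1 xB cardB.
Qed.

Lemma injection_covering k n (hkn : (k <= n)%N) (a : 'I_k -> 'I_n) :
  exists2 rec : 'I_k -> 'I_n, injective rec & forall t, exists s, rec s = a t.
Proof.
pose U := [set a t | t in 'I_k].
have [B sUB cardB] : exists2 B : {set 'I_n}, U \subset B & #|B| = k.
  apply: superset_of_card; rewrite card_ord hkn andbT.
  by rewrite (leq_trans (leq_imset_card _ _)) // card_ord.
exists (fun s => enum_val (cast_ord (esym cardB) s)).
  by move=> s t /enum_val_inj /cast_ord_inj.
move=> t; have aB : a t \in B by apply: (fintype.subsetP sUB); exact: imset_f.
by exists (cast_ord cardB (enum_rank_in aB (a t))); rewrite cast_ordK enum_rankK_in.
Qed.

Lemma sum_over_fibres (V : nmodType) (I J K : finType) (a : I -> J) (r : K -> J)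
    (g : I -> V) :
  injective r -> (forall i, exists s, r s = a i) ->
  \sum_s \sum_(i | a i == r s) g i = \sum_i g i.
Proof.
move=> r_inj cover; under eq_bigr do rewrite big_mkcond.
rewrite exchange_big; apply: eq_bigr => i _ /=; have [s <-] := cover i.
rewrite (bigD1 s) //= eqxx big1 ?addr0 // => t ts.
by rewrite (inj_eq r_inj) eq_sym (negbTE ts).
Qed.

Lemma finite_family_max (R : realDomainType) (I : finType) (X : Type)
    (P : I -> X -> Prop) (V : I -> X -> R) :
  (forall i, (exists x, P i x) ->
     exists2 x, P i x & forall y, P i y -> V i y <= V i x) ->
  (exists i x, P i x) ->
  exists i x, P i x /\ forall j y, P j y -> V j y <= V i x.
Proof.
move=> attained [i0 [x0 Px0]].
have /choice [best bestP] : forall i, exists x, (exists x, P i x) ->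
    P i x /\ forall y, P i y -> V i y <= V i x.
  move=> i; have [/attained [x Px xmax]|infeas] := pselect (exists x, P i x).
    by exists x.
  by exists x0 => /infeas.
pose feasible := [pred i | `[< exists x, P i x >]].
have feas0 : feasible i0 by apply/asboolP; exists x0.
case: (arg_maxP (fun i => V i (best i)) feas0) => i /asboolP /bestP [Pi _] imax.
exists i, (best i); split => // j y Pjy.
have feas_j : exists x, P j x by exists y.
apply: le_trans (imax j (asboolT feas_j)); exact: (bestP j feas_j).2.
Qed.

Section Topology.
Local Open Scope classical_set_scope.
Variable R : realType.

Lemma sum_continuous (X : topologicalType) (I : Type) (r : seq I) (F : I -> X -> R) :
  (forall i, continuous (F i)) -> continuous (fun x => \sum_(i <- r) F i x).
Proof. by move=> Fc; apply: continuous_big => [|i _]; [exact: add_continuous|exact: Fc]. Qed.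

Lemma closed_forall (X : topologicalType) (I : Type) (F : I -> set X) :
  (forall i, closed (F i)) -> closed [set x | forall i, F i x].
Proof.
move=> Fc; have -> : [set x | forall i, F i x] = \bigcap_(i in setT) F i.
  by apply/seteqP; split => x /= Fx i => [_|]; apply: Fx.
exact: closed_bigI.
Qed.

Lemma closed_le_cont (X : topologicalType) (f g : X -> R) :
  continuous f -> continuous g -> closed [set x | f x <= g x].
Proof.
move=> fc gc; have -> : [set x | f x <= g x] = (g - f) @^-1` [set y | 0 <= y].
  by apply/seteqP; split => x /=; rewrite subr_ge0.
by apply: preimage_closed (@closed_ge R 0) => x _; exact: (continuousB (gc x) (fc x)).
Qed.

Lemma closed_eq_cont (X : topologicalType) (f : X -> R) c :
  continuous f -> closed [set x | f x = c].
Proof. by move=> fc; apply: preimage_closed (@closed_eq R c) => x _; exact: fc. Qed.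

Definition unit_cube {m} : set 'rV[R]_m := [set v | forall i, `[0, 1] (v ord0 i)].

Lemma closed_in_cube_max m (C : set 'rV[R]_m) (f : 'rV[R]_m -> R) :
  closed C -> C `<=` unit_cube -> C !=set0 -> continuous f ->
  exists2 v, C v & forall w, C w -> f w <= f v.
Proof.
move=> C_closed C_cube C_ne f_cont.
have C_compact : compact C.
  apply: subclosed_compact C_closed _ C_cube.
  exact: rV_compact (fun=> @segment_compact R 0 1).
have [v /set_mem Cv vmax] := compact_EVT_max C_ne C_compact (continuous_subspaceT f_cont).
by exists v => // w Cw; apply: vmax; exact: mem_set.
Qed.

End Topology.
Arguments unit_cube {R m}.

Section Persuasion.
Variables (R : realType) (T : finType) (n k : nat) (q : {ffun state T n -> R}).
Variables (rho xi : T -> R).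
Hypothesis q_distr : is_distr q.
Local Notation scheme := {ffun state T n -> {ffun 'I_k -> R}}.

Definition sig_mass (phi : scheme) (s : 'I_k) (f : state T n -> R) : R :=
  \sum_th q th * phi th s * f th.

Local Notation rho_mass phi s i := (sig_mass phi s (fun th => rho (th i))).
Local Notation xi_mass phi s i := (sig_mass phi s (fun th => xi (th i))).

Lemma joint_ge0 (phi : scheme) th s : is_scheme phi -> 0 <= q th * phi th s.
Proof. by case=> phi_ge0 _; rewrite mulr_ge0 //; case: q_distr. Qed.

Lemma sig_prob_ge0 (phi : scheme) s : is_scheme phi -> 0 <= sig_prob q phi s.
Proof. by move=> phi_sch; apply: sumr_ge0 => th _; exact: joint_ge0. Qed.

Lemma sig_mass_null (phi : scheme) s f :
  is_scheme phi -> sig_prob q phi s = 0 -> sig_mass phi s f = 0.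
Proof.
move=> phi_sch null; have := psumr_eq0P (fun th _ => joint_ge0 th s phi_sch) null.
by move=> joint0; apply: big1 => th _; rewrite joint0 ?mul0r.
Qed.

(* Conditional expectations given s compare as the masses on s do; when s is
   never sent, both masses vanish. *)
Lemma sig_mass_le (phi : scheme) s f g : is_scheme phi ->
  (0 < sig_prob q phi s -> cond_exp q phi s f <= cond_exp q phi s g) ->
  sig_mass phi s f <= sig_mass phi s g.
Proof.
move=> phi_sch le_fg; have := sig_prob_ge0 s phi_sch.
rewrite le_eqVlt => /predU1P [/esym null | pos]; first by rewrite !sig_mass_null.
by have := le_fg pos; rewrite /cond_exp ler_pM2r ?invr_gt0.
Qed.

Lemma cond_exp_le (phi : scheme) s f g : is_scheme phi ->
  sig_mass phi s f <= sig_mass phi s g -> cond_exp q phi s f <= cond_exp q phi s g.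
Proof. by move=> phi_sch le_fg; rewrite /cond_exp ler_wpM2r ?invr_ge0 ?sig_prob_ge0. Qed.

(* Persuasiveness stated with masses, i.e. as finitely many linear
   inequalities in the scheme. *)
Lemma persuasiveP (phi : scheme) rec : is_scheme phi ->
  persuasive q rho phi rec <-> forall s j, rho_mass phi s j <= rho_mass phi s (rec s).
Proof.
move=> phi_sch; split => [pers s j | le_rec s _ j]; last exact: cond_exp_le.
by apply: sig_mass_le => // pos; exact: pers.
Qed.

Lemma best_resp_mass (phi : scheme) s i : is_scheme phi ->
  i \in best_resp q rho phi s -> forall j, rho_mass phi s j <= rho_mass phi s i.
Proof.
move=> phi_sch; rewrite inE => /forallP best j.
by apply: sig_mass_le => // _; exact: best.
Qed.

Lemma recv_actionP (phi : scheme) s (i0 : 'I_n) : exists i,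
  [/\ recv_action q rho xi phi s = Some i, i \in best_resp q rho phi s &
      forall j, j \in best_resp q rho phi s -> send_val q xi phi s j <= send_val q xi phi s i].
Proof.
case: (@arg_maxP _ _ _ i0 predT (recv_val q rho phi s) isT) => ib _ ib_max.
have ib_best : ib \in best_resp q rho phi s.
  by rewrite inE; apply/forallP => j; exact: ib_max.
case: (arg_maxP (send_val q xi phi s) ib_best) => i1 i1_best i1_max.
rewrite /recv_action; case: pickP => [i /andP [i_best /forall_inP i_max] | none].
  by exists i; split => // j; exact: i_max.
have i1_in : i1 \in best_resp q rho phi s := i1_best.
have := none i1; rewrite i1_in /= => /negbT /negP []; apply/forall_inP.
by move=> j; exact: i1_max.
Qed.

Definition direct_value (phi : scheme) (rec : 'I_k -> 'I_n) : R :=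
  \sum_s xi_mass phi s (rec s).

Lemma u_S_direct (phi : scheme) (i0 : 'I_n) :
  u_S q rho xi phi = direct_value phi (fun s => odflt i0 (recv_action q rho xi phi s)).
Proof. by apply: eq_bigr => s _; have [i [-> _ _]] := recv_actionP phi s i0. Qed.

(* Against a persuasive direct scheme, the receiver's tie-breaking in favour of
   the sender earns the sender at least the direct value. *)
Lemma direct_value_le_u_S (phi : scheme) rec :
  is_scheme phi -> persuasive q rho phi rec -> direct_value phi rec <= u_S q rho xi phi.
Proof.
move=> phi_sch pers; apply: ler_sum => s _.
have [i [-> i_best i_max]] := recv_actionP phi s (rec s).
apply: (sig_mass_le (g := fun th => xi (th i))) => // pos; apply: i_max.
by rewrite inE; apply/forallP => j; exact: pers s pos j.
Qed.

Definition merge (phi : scheme) (a rec : 'I_k -> 'I_n) : scheme :=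
  [ffun th => [ffun s => \sum_(t | a t == rec s) phi th t]].

Lemma merge_mass (phi : scheme) a rec s f :
  sig_mass (merge phi a rec) s f = \sum_(t | a t == rec s) sig_mass phi t f.
Proof.
rewrite /sig_mass exchange_big; apply: eq_bigr => th _.
by rewrite !ffunE mulr_sumr mulr_suml.
Qed.

Lemma merge_scheme (phi : scheme) (a rec : 'I_k -> 'I_n) :
  is_scheme phi -> injective rec -> (forall t, exists s, rec s = a t) ->
  is_scheme (merge phi a rec).
Proof.
move=> [phi_ge0 phi_sum1] rec_inj cover; split => [th s | th].
  by rewrite !ffunE sumr_ge0.
under eq_bigr do rewrite !ffunE.
by rewrite (sum_over_fibres (phi th) rec_inj cover).
Qed.

(* Every scheme is dominated by a persuasive direct scheme whose
   recommendations are k distinct actions: pool the signals after which the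
   receiver takes the same action, and leave the remaining signals unused. *)
Lemma dominating_direct_scheme (i0 : 'I_n) (hkn : (k <= n)%N) (phi : scheme) :
  is_scheme phi -> exists (phi' : scheme) (rec : 'I_k -> 'I_n),
    [/\ injective rec, is_scheme phi', persuasive q rho phi' rec &
        u_S q rho xi phi <= direct_value phi' rec].
Proof.
move=> phi_sch; pose a s := odflt i0 (recv_action q rho xi phi s).
have a_best s : a s \in best_resp q rho phi s.
  by rewrite /a; have [i [-> ? _]] := recv_actionP phi s i0.
have [rec rec_inj cover] := injection_covering hkn a.
have merged_sch := merge_scheme phi_sch rec_inj cover.
exists (merge phi a rec), rec; split => //.
  apply/persuasiveP => // s j; rewrite !merge_mass; apply: ler_sum => t /eqP <-.
  exact: best_resp_mass.
rewrite (u_S_direct phi i0) /direct_value.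
rewrite -(sum_over_fibres (fun t => xi_mass phi t (a t)) rec_inj cover).
by apply: ler_sum => s _; rewrite merge_mass; apply: ler_sum => t /eqP ->.
Qed.

Definition permute_state (tau : 'S_n) (th : state T n) : state T n :=
  [ffun i => th (tau i)].

Lemma permute_stateK tau : cancel (permute_state tau) (permute_state tau^-1).
Proof. by move=> th; apply/ffunP => i; rewrite !ffunE permKV. Qed.

Definition relabel (tau : 'S_n) (phi : scheme) : scheme :=
  [ffun th => phi (permute_state tau^-1 th)].

Lemma relabel_scheme tau (phi : scheme) : is_scheme phi -> is_scheme (relabel tau phi).
Proof. by case=> phi_ge0 phi_sum1; split => th; rewrite ffunE. Qed.

Lemma relabel_mass tau (phi : scheme) s (u : T -> R) i : symmetric_instance q ->
  sig_mass (relabel tau phi) s (fun th => u (th i)) =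
  sig_mass phi s (fun th => u (th (tau i))).
Proof.
move=> sym; rewrite /sig_mass (reindex_inj (can_inj (permute_stateK tau))).
apply: eq_bigr => th _; rewrite !ffunE permute_stateK.
by congr (_ * _ * _); exact: sym.
Qed.

Lemma relabel_to_first (hkn : (k <= n)%N) (phi : scheme) rec :
  symmetric_instance q -> injective rec -> is_scheme phi -> persuasive q rho phi rec ->
  exists2 phi' : scheme, is_scheme phi' /\ persuasive q rho phi' (widen_ord hkn) &
    direct_value phi' (widen_ord hkn) = direct_value phi rec.
Proof.
move=> sym rec_inj phi_sch /(persuasiveP _ phi_sch) pers.
have [tau tau_rec] := perm_of_injection hkn rec_inj.
have sch' := relabel_scheme tau phi_sch.
exists (relabel tau phi); first split => //.
  by apply/persuasiveP => // s j; rewrite !relabel_mass // tau_rec.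
by apply: eq_bigr => s _; rewrite relabel_mass // tau_rec.
Qed.

(* Schemes as vectors indexed by the cells (state, signal), so that the
   topology of row vectors applies. *)
Local Open Scope classical_set_scope.
Local Notation cell := (state T n * 'I_k)%type.
Local Notation vec := 'rV[R]_#|{: cell}|.

Definition scheme_of_vec (v : vec) : scheme :=
  [ffun th => [ffun s => v ord0 (enum_rank (th, s))]].

Definition vec_of_scheme (phi : scheme) : vec :=
  \row_j phi (enum_val j).1 (enum_val j).2.

Lemma vec_of_schemeK : cancel vec_of_scheme scheme_of_vec.
Proof.
by move=> phi; apply/ffunP => th; apply/ffunP => s; rewrite !ffunE mxE enum_rankK.
Qed.

Lemma scheme_of_vec_continuous th s : continuous (fun v : vec => scheme_of_vec v th s).
Proof. under eq_fun do rewrite !ffunE; exact: coord_continuous. Qed.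

Lemma sig_mass_continuous s f : continuous (fun v : vec => sig_mass (scheme_of_vec v) s f).
Proof.
apply: sum_continuous => th v.
apply: (@continuousM _ _ (fun x => q th * scheme_of_vec x th s) (fun=> f th));
  last exact: cst_continuous.
apply: (@continuousM _ _ (fun=> q th)); first exact: cst_continuous.
exact: scheme_of_vec_continuous.
Qed.

(* The vectors encoding persuasive direct schemes for rec form a closed
   subset of the unit cube: they are cut out by finitely many linear
   constraints, which include 0 <= phi th s <= 1. *)
Definition persuasive_set rec : set vec :=
  [set v | is_scheme (scheme_of_vec v) /\ persuasive q rho (scheme_of_vec v) rec].

Lemma persuasive_set_closed rec : closed (persuasive_set rec).
Proof.
have -> : persuasive_set rec =
    [set v | forall th s, 0 <= scheme_of_vec v th s] `&`
    ([set v | forall th, \sum_s scheme_of_vec v th s = 1] `&`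
     [set v | forall s j, rho_mass (scheme_of_vec v) s j <=
                          rho_mass (scheme_of_vec v) s (rec s)]).
  apply/seteqP; split => v /=.
    by move=> [[ge0 sum1] /persuasiveP pers]; do !split => //; exact: pers.
  move=> [ge0 [sum1 pers]]; have v_sch : is_scheme (scheme_of_vec v) by [].
  by split => //; apply/persuasiveP.
apply: closedI; [|apply: closedI]; do 2?apply: closed_forall => ?.
- by apply: closed_le_cont; [exact: cst_continuous | exact: scheme_of_vec_continuous].
- by apply: closed_eq_cont; apply: sum_continuous => s; exact: scheme_of_vec_continuous.
- by apply: closed_le_cont; exact: sig_mass_continuous.
Qed.

Lemma persuasive_set_in_cube rec : persuasive_set rec `<=` unit_cube.
Proof.
move=> v [[ge0 sum1] _] j; rewrite /= in_itv /=.
have -> : v ord0 j = scheme_of_vec v (enum_val j).1 (enum_val j).2.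
  by rewrite !ffunE -surjective_pairing enum_valK.
rewrite ge0 -(sum1 (enum_val j).1) (bigD1 (enum_val j).2) //= lerDl.
by apply: sumr_ge0 => s _; exact: ge0.
Qed.

Lemma persuasive_optimum rec :
  (exists phi : scheme, is_scheme phi /\ persuasive q rho phi rec) ->
  exists2 phi : scheme, is_scheme phi /\ persuasive q rho phi rec &
    forall phi', is_scheme phi' /\ persuasive q rho phi' rec ->
      direct_value phi' rec <= direct_value phi rec.
Proof.
move=> [phi0 feas0].
have [||v feas_v v_max] := closed_in_cube_max (persuasive_set_closed (rec := rec))
  (@persuasive_set_in_cube rec) _ (f := fun v => direct_value (scheme_of_vec v) rec).
- by exists (vec_of_scheme phi0); rewrite /persuasive_set /= vec_of_schemeK.
- by apply: sum_continuous => s; exact: sig_mass_continuous.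
exists (scheme_of_vec v) => // phi' feas'; rewrite -(vec_of_schemeK phi').
by apply: v_max; rewrite /persuasive_set /= vec_of_schemeK.
Qed.

End Persuasion.

Section Optimal.
Variables (R : realType) (T : finType) (n k : nat) (q : {ffun state T n -> R}).
Variables (rho xi : T -> R).
Hypotheses (q_distr : is_distr q) (k_gt0 : (0 < k)%N) (hkn : (k <= n)%N).
Local Notation scheme := {ffun state T n -> {ffun 'I_k -> R}}.

(* An action, used as the default value of the receiver's choice. *)
Let i0 : 'I_n := widen_ord hkn (Ordinal k_gt0).

Lemma constant_scheme : exists phi : scheme, is_scheme phi.
Proof.
exists [ffun th => [ffun s => (s == Ordinal k_gt0)%:R]]; split => [th s | th].
  by rewrite !ffunE ler0n.
under eq_bigr do rewrite !ffunE.
by rewrite (bigD1 (Ordinal k_gt0)) //= ?eqxx big1 ?addr0 // => s /negbTE ->.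
Qed.

Lemma direct_scheme_exists : exists (phi : scheme) (rec : 'I_k -> 'I_n),
  [/\ injective rec, is_scheme phi & persuasive q rho phi rec].
Proof.
have [phi phi_sch] := constant_scheme.
have [phi' [rec [? ? ? _]]] := dominating_direct_scheme rho xi q_distr i0 hkn phi_sch.
by exists phi', rec.
Qed.

(* First claim: optimising the direct value over the finitely many injective
   recommendations, each with its optimal persuasive scheme, yields an optimal
   scheme, since every scheme is dominated by such a direct one. *)
Lemma optimal_injective_scheme : exists (phi : scheme) (rec : 'I_k -> 'I_n),
  optimal q rho xi phi /\ persuasive q rho phi rec /\ injective rec.
Proof.
pose P (r : {ffun 'I_k -> 'I_n}) (phi : scheme) :=
  injective r /\ is_scheme phi /\ persuasive q rho phi r.
have [r [phi [[r_inj [phi_sch pers]] phi_max]]] : exists r phi, P r phi /\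
    forall r' phi', P r' phi' -> direct_value q xi phi' r' <= direct_value q xi phi r.
  apply: finite_family_max => [r [phi [r_inj feas]]|].
    have [phi' feas' phi'_max] := persuasive_optimum xi q_distr (ex_intro _ phi feas).
    by exists phi' => // phi'' [_ feas'']; exact: phi'_max.
  have [phi [rec [rec_inj ? ?]]] := direct_scheme_exists.
  by exists (finfun rec), phi; rewrite /P fun_of_finfun.
exists phi, r; split => //; split => // phi' sch'.
have [phi'' [rec [rec_inj sch'' pers'' dom]]] :=
  dominating_direct_scheme rho xi q_distr i0 hkn sch'.
apply: le_trans dom (le_trans _ (direct_value_le_u_S xi q_distr phi_sch pers)).
by have := phi_max (finfun rec) phi''; rewrite /P fun_of_finfun; apply.
Qed.

(* Second claim: in a symmetric instance, relabelling turns every direct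
   scheme with distinct recommendations into one recommending 1..k, so the
   optimal persuasive scheme for the recommendation 1..k is optimal. *)
Lemma optimal_scheme_first_actions : symmetric_instance q ->
  exists phi : scheme, optimal q rho xi phi /\ persuasive q rho phi (widen_ord hkn).
Proof.
move=> sym.
have [|phi [phi_sch pers] phi_max] := persuasive_optimum (rho := rho) xi q_distr (rec := widen_ord hkn).
  have [phi1 [rec1 [rec1_inj sch1 pers1]]] := direct_scheme_exists.
  by have [phi2 feas2 _] := relabel_to_first xi q_distr hkn sym rec1_inj sch1 pers1; exists phi2.
exists phi; split => //; split => // phi' sch'.
have [phi'' [rec [rec_inj sch'' pers'' dom]]] :=
  dominating_direct_scheme rho xi q_distr i0 hkn sch'.
have [phi3 feas3 same_value] := relabel_to_first xi q_distr hkn sym rec_inj sch'' pers''.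
apply: le_trans dom _; rewrite -same_value.
exact: le_trans (phi_max _ feas3) (direct_value_le_u_S xi q_distr phi_sch pers).
Qed.

End Optimal.

Theorem lemma2p1 (R : realType) (T : finType) (n k : nat)
  (hk2 : (2 <= k)%N) (hkn : (k <= n)%N)
  (q : {ffun state T n -> R}) (rho xi : T -> R) :
  is_distr q ->
  (exists (phi : {ffun state T n -> {ffun 'I_k -> R}}) (rec : 'I_k -> 'I_n),
      optimal q rho xi phi /\ persuasive q rho phi rec /\ injective rec) /\
  (symmetric_instance q ->
   exists (phi : {ffun state T n -> {ffun 'I_k -> R}}),
      optimal q rho xi phi /\ persuasive q rho phi (widen_ord hkn)).
Proof.
move=> q_distr; have k_gt0 : (0 < k)%N by apply: leq_trans hk2.
split; first exact: optimal_injective_scheme.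
exact: optimal_scheme_first_actions.
Qed.
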